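(* For every variable-free formula $\psi$, the logics $\mathrm{E4}+\psi$, $\mathrm{S04}+\psi$ and $\mathrm{EMC4}+\psi$ have the finite model property (there is a class of finite neighborhood frames whose set of valid formulas is exactly the logic).
   Context: Modal formulas are built from a countable set $Var$ of propositional variables using $\neg$, $\wedge$ and the unary operator $\Box$; a formula is variable-free if no element of $Var$ occurs in it except within the constants $\top$, $\bot$ (here $\top:=\neg(p\wedge\neg p)$, $\bot:=p\wedge\neg p$ are treated as constants). A (modal) logic is a set of formulas containing all classical tautologies and closed under modus ponens, uniform substitution, and the rule (RE): from $\varphi\leftrightarrow\psi$ infer $\Box\varphi\leftrightarrow\Box\psi$. $\mathrm{E}$ is the smallest logic; $\mathrm{L}+\psi$ is the smallest logic containing $\mathrm{L}\cup\{\psi\}$. Axioms: $(4)\ \Box p\to\Box\Box p$; $(\mathrm{T})\ \Box p\to p$; $(\mathrm{M})\ \Box(p\wedge q)\to(\Box p\wedge\Box q)$; $(\mathrm{C})\ (\Box p\wedge\Box q)\to\Box(p\wedge q)$. $\mathrm{E4}=\mathrm{E}+4$, $\mathrm{EMC4}=\mathrm{E4}+\mathrm{M}+\mathrm{C}$, $\mathrm{S04}=\mathrm{E4}+\mathrm{T}+\mathrm{M}$. A neighborhood frame is $(W,\bm{\Box})$ with $W\neq\varnothing$, $\bm{\Box}:\mathcal P(W)\to\mathcal P(W)$; models add $V:Var\to\mathcal P(W)$; truth sets: $|p|_M=V(p)$, $|\neg\varphi|_M=W\setminus|\varphi|_M$, $|\varphi\wedge\psi|_M=|\varphi|_M\cap|\psi|_M$,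 $|\Box\varphi|_M=\bm{\Box}|\varphi|_M$; $\varphi$ is valid on a frame if $|\varphi|_M=W$ for all models $M$ on it. *)

From mathcomp Require Import all_boot.
Unset Printing Implicit Defensive.

Inductive form : Type :=
| Var : nat -> form
| Neg : form -> form
| And : form -> form -> form
| Box : form -> form.

Definition p0 : form := Var 0.
Definition Bot : form := And p0 (Neg p0).
Definition Top : form := Neg (And p0 (Neg p0)).
Definition Or (a b : form) : form := Neg (And (Neg a) (Neg b)).
Definition Imp (a b : form) : form := Neg (And a (Neg b)).
Definition Iff (a b : form) : form := And (Imp a b) (Imp b a).

Inductive var_free : form -> Prop :=
| vf_top : var_free Top
| vf_bot : var_free Bot
| vf_neg a : var_free a -> var_free (Neg a)
| vf_and a b : var_free a -> var_free b -> var_free (And a b)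
| vf_box a : var_free a -> var_free (Box a).

(* Classical tautologies: true under every boolean valuation of the
   propositional variables and of the boxed formulas (treated as atoms). *)
Fixpoint beval (v : nat -> bool) (bx : form -> bool) (f : form) : bool :=
  match f with
  | Var n => v n
  | Neg a => ~~ beval v bx a
  | And a b => beval v bx a && beval v bx b
  | Box a => bx a
  end.

Definition tautology (f : form) : Prop :=
  forall (v : nat -> bool) (bx : form -> bool), beval v bx f = true.

Fixpoint subst (s : nat -> form) (f : form) : form :=
  match f with
  | Var n => s n
  | Neg a => Neg (subst s a)
  | And a b => And (subst s a) (subst s b)
  | Box a => Box (subst s a)
  end.

Definition is_logic (L : form -> Prop) : Prop :=
  [/\ (forall f, tautology f -> L f),
      (forall a b, L a -> L (Imp a b) -> L b),
      (forall s a, L a -> L (subst s a)) &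
      (forall a b, L (Iff a b) -> L (Iff (Box a) (Box b)))].

Definition gen_logic (A : form -> Prop) (f : form) : Prop :=
  forall L, is_logic L -> (forall a, A a -> L a) -> L f.

Definition E : form -> Prop := gen_logic (fun _ => False).
Definition plus (L : form -> Prop) (psi : form) : form -> Prop :=
  gen_logic (fun f => L f \/ f = psi).

Definition p : form := Var 0.
Definition q : form := Var 1.
Definition ax4 : form := Imp (Box p) (Box (Box p)).
Definition axT : form := Imp (Box p) p.
Definition axM : form := Imp (Box (And p q)) (And (Box p) (Box q)).
Definition axC : form := Imp (And (Box p) (Box q)) (Box (And p q)).

Definition E4 : form -> Prop := plus E ax4.
Definition EMC4 : form -> Prop := plus (plus E4 axM) axC.
Definition S04 : form -> Prop := plus (plus E4 axT) axM.

Record finframe := FinFrame {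
  fW :> finType;
  fW_nonempty : 0 < #|fW|;
  fbox : {set fW} -> {set fW}
}.

Fixpoint truth (F : finframe) (V : nat -> {set F}) (f : form) : {set F} :=
  match f with
  | Var n => V n
  | Neg a => ~: truth F V a
  | And a b => truth F V a :&: truth F V b
  | Box a => fbox F (truth F V a)
  end.

Definition valid (F : finframe) (f : form) : Prop :=
  forall V : nat -> {set F}, truth F V f = [set: F].

Definition fmp (L : form -> Prop) : Prop :=
  exists C : finframe -> Prop, forall f, L f <-> (forall F, C F -> valid F f).

From mathcomp Require Import all_boot boolp.
From HB Require Import structures.

(* Proof idea: a canonical finite model.  Given f outside L = L0 + psi, let S
   collect the subformulas of f, psi and Box Top.  The worlds are the
   L-consistent truth assignments to S, and a formula a of S is interpreted by
   its extension ext a, the set of worlds making a true.  Any neighborhood map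
   sending ext c to ext (Box c) whenever Box c is in S makes ext a the truth set
   of every a in S; hence f is refuted, and psi is valid because, being
   variable-free, its truth set does not depend on the valuation.  It remains
   to choose the map so that the frame validates L0:
   - E4: ext c |-> ext (Box c) and X |-> X elsewhere; (RE) makes this well
     defined and 4 makes it transitive;
   - S04: X |-> the union of the ext (Box c) contained in X;
   - EMC4: the relational box of  w R u <-> u satisfies c and Box c whenever w
     satisfies Box c, restricted to ext (Box Top) since EMC4 does not prove
     Box Top; C and 4 gather the boxes true at w into one box, which gives
     adequacy. *)

Set Implicit Arguments.
Unset Strict Implicit.

Definition form_eq_dec (a b : form) : {a = b} + {a <> b}.
Proof. decide equality; exact: (decP eqP). Defined.
HB.instance Definition _ := hasDecEq.Build form (compareP form_eq_dec).

Fixpoint bigAnd (hs : seq form) : form :=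
  if hs is h :: t then And h (bigAnd t) else Top.

Lemma beval_Top v bx : beval v bx Top.
Proof. by rewrite /= andbN. Qed.

Lemma beval_bigAnd v bx hs : beval v bx (bigAnd hs) = all (beval v bx) hs.
Proof. by elim: hs => [|h t IH] /=; [exact: beval_Top | rewrite IH]. Qed.

Fixpoint sub (f : form) : seq form :=
  f :: match f with
       | Var _ => [::]
       | Neg a | Box a => sub a
       | And a b => sub a ++ sub b
       end.

Lemma sub_self f : f \in sub f.
Proof. by case: f => *; exact: mem_head. Qed.

Section PropositionalReasoning.
Variable L : form -> Prop.
Hypothesis logicL : is_logic L.

Lemma logic_taut f : tautology f -> L f.
Proof. by case: logicL => taut _ _ _; exact: taut. Qed.

Lemma logic_MP a b : L a -> L (Imp a b) -> L b.
Proof. by case: logicL => _ mp _ _; exact: mp. Qed.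

Lemma logic_subst s a : L a -> L (subst s a).
Proof. by case: logicL => _ _ us _; exact: us. Qed.

Lemma logic_RE a b : L (Iff a b) -> L (Iff (Box a) (Box b)).
Proof. by case: logicL => _ _ _ re; exact: re. Qed.

Lemma logic_consequence a b :
  L a -> (forall v bx, beval v bx a -> beval v bx b) -> L b.
Proof.
move=> La ab; apply: logic_MP La _; apply: logic_taut => v bx /=.
by case: (boolP (beval v bx a)) => // /ab ->.
Qed.

Lemma logic_And a b : L a -> L b -> L (And a b).
Proof.
move=> La Lb; apply: logic_MP Lb _; apply: (logic_consequence La) => v bx /= ->.
by rewrite andbN.
Qed.

Lemma logic_AndP a b : L (And a b) <-> L a /\ L b.
Proof.
split=> [Lab | [La Lb]]; last exact: logic_And.
by split; apply: (logic_consequence Lab) => v bx /andP[].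
Qed.

Lemma logic_bigAnd hs : {in hs, forall h, L h} -> L (bigAnd hs).
Proof.
elim: hs => [_ | h t IH Lht] /=; first exact/logic_taut/beval_Top.
apply: logic_And; first exact/Lht/mem_head.
by apply: IH => g gt; apply: Lht; rewrite inE gt orbT.
Qed.

Definition subst2 (a b : form) (n : nat) : form :=
  match n with 0 => a | 1 => b | _ => Var n end.

Lemma logic_ax4 a : L ax4 -> L (Imp (Box a) (Box (Box a))).
Proof. by move/(logic_subst (subst2 a a)). Qed.

Lemma logic_axT a : L axT -> L (Imp (Box a) a).
Proof. by move/(logic_subst (subst2 a a)). Qed.

Lemma logic_axM a b : L axM -> L (Imp (Box (And a b)) (And (Box a) (Box b))).
Proof. by move/(logic_subst (subst2 a b)). Qed.

Lemma logic_axC a b : L axC -> L (Imp (And (Box a) (Box b)) (Box (And a b))).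
Proof. by move/(logic_subst (subst2 a b)). Qed.

Lemma logic_box_mono a b : L axM -> L (Imp a b) -> L (Imp (Box a) (Box b)).
Proof.
move=> LM Lab.
have a_aAb : L (Iff a (And a b)).
  apply: (logic_consequence Lab) => v bx /=.
  by case: (beval v bx a); case: (beval v bx b).
apply: logic_consequence (logic_And (logic_RE a_aAb) (logic_axM a b LM)) _.
by move=> v bx /=; case: (bx a); case: (bx b); case: (bx (And a b)).
Qed.

End PropositionalReasoning.

Lemma truth_subst (F : finframe) (V : nat -> {set F}) s a :
  truth F V (subst s a) = truth F (fun k => truth F V (s k)) a.
Proof. by elim: a => [k|b IH|b IHb c IHc|b IH] //=; rewrite ?IH ?IHb ?IHc. Qed.

Lemma beval_truth (F : finframe) (V : nat -> {set F}) (w : F) f :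
  beval (fun k => w \in V k) (fun a => w \in truth F V (Box a)) f = (w \in truth F V f).
Proof. by elim: f => [k|b IH|b IHb c IHc|b IH] //=; rewrite ?inE ?IH ?IHb ?IHc. Qed.

Lemma truth_Iff (F : finframe) (V : nat -> {set F}) a b :
  truth F V (Iff a b) = setT <-> truth F V a = truth F V b.
Proof.
split=> [/setP ab | ab]; last by apply/setP => w; rewrite /= ab !inE andbN.
apply/setP => w; move: (ab w); rewrite !inE.
by case: (w \in truth F V a); case: (w \in truth F V b).
Qed.

Lemma valid_is_logic (F : finframe) : is_logic (valid F).
Proof.
split.
- by move=> f taut V; apply/setP => w; rewrite inE -beval_truth; exact: taut.
- move=> a b Va Vab V; apply/setP => w; move/setP/(_ w): (Vab V).
  by rewrite /= !inE (Va V) inE /=; case: (w \in truth F V b).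
- by move=> s a Va V; rewrite truth_subst; exact: Va.
- by move=> a b Vab V; apply/truth_Iff => /=; rewrite ((truth_Iff _ _ _).1 (Vab V)).
Qed.

Lemma truth_var_free (F : finframe) (V V' : nat -> {set F}) a :
  var_free a -> truth F V a = truth F V' a.
Proof. by elim=> [| | b _ IH | b c _ IHb _ IHc | b _ IH] /=; rewrite ?setICr ?IH ?IHb ?IHc. Qed.

Section Validity.
Variable F : finframe.

Lemma valid_ax4 : (forall X, fbox F X \subset fbox F (fbox F X)) -> valid F ax4.
Proof.
move=> box4 V; apply/setP => w; rewrite /= !inE.
by case: (boolP (w \in _)) => //= /(subsetP (box4 _)) ->.
Qed.

Lemma valid_axT : (forall X, fbox F X \subset X) -> valid F axT.
Proof.
move=> boxT V; apply/setP => w; rewrite /= !inE.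
by case: (boolP (w \in _)) => //= /(subsetP (boxT _)) ->.
Qed.

Lemma valid_axM :
  (forall X Y : {set F}, X \subset Y -> fbox F X \subset fbox F Y) -> valid F axM.
Proof.
move=> boxM V; apply/setP => w; rewrite /= !inE.
case: (boolP (w \in _)) => //= wXY.
by rewrite (subsetP (boxM _ _ (subsetIl _ _)) _ wXY) (subsetP (boxM _ _ (subsetIr _ _)) _ wXY).
Qed.

Lemma valid_axC :
  (forall X Y : {set F}, fbox F X :&: fbox F Y \subset fbox F (X :&: Y)) -> valid F axC.
Proof.
move=> boxC V; apply/setP => w; rewrite /= !inE.
case: (boolP (w \in fbox F (V 0))) => //= wX; case: (boolP (w \in fbox F (V 1))) => //= wY.
by rewrite (subsetP (boxC _ _)) // inE wX wY.
Qed.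

Lemma valid_E a : E a -> valid F a.
Proof. by apply; [exact: valid_is_logic | case]. Qed.

Lemma valid_plus (L0 : form -> Prop) x :
  (forall a, L0 a -> valid F a) -> valid F x -> forall a, plus L0 x a -> valid F a.
Proof.
move=> VL0 Vx a; apply=> [|b [L0b | ->] //]; first exact: valid_is_logic.
exact: VL0.
Qed.

End Validity.

Lemma gen_logic_is_logic A : is_logic (gen_logic A).
Proof.
split.
- by move=> f taut L logicL _; exact: logic_taut.
- by move=> a b La Lab L logicL LA; apply: (logic_MP logicL (La L logicL LA)); exact: Lab.
- by move=> s a La L logicL LA; apply: logic_subst => //; exact: La.
- by move=> a b Lab L logicL LA; apply: logic_RE => //; exact: Lab.
Qed.

Lemma plus_sub (L0 : form -> Prop) x a : L0 a -> plus L0 x a.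
Proof. by move=> L0a L _; apply; left. Qed.

Lemma plus_axiom (L0 : form -> Prop) x : plus L0 x x.
Proof. by move=> L _; apply; right. Qed.

Lemma fmp_refuting_frames (L : form -> Prop) :
  (forall f, ~ L f -> exists F, (forall g, L g -> valid F g) /\ ~ valid F f) -> fmp L.
Proof.
move=> refute; exists (fun F => forall g, L g -> valid F g) => f.
split=> [Lf F VL | VLf]; first exact: VL.
by apply: contrapT => /refute [F [VL nVf]]; exact/nVf/VLf.
Qed.

Section Atoms.
Variables (L : form -> Prop) (S : seq form).
Local Notation atom := {ffun 'I_(size S) -> bool}.

Definition atom_of v bx : atom := [ffun i : 'I_(size S) => beval v bx (nth Top S i)].

Definition lit (b : bool) f := if b then f else Neg f.

Definition atom_conj (s : atom) : form :=
  bigAnd [seq lit (s i) (nth Top S i) | i <- enum 'I_(size S)].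

Definition consistent (s : atom) : Prop := ~ L (Neg (atom_conj s)).

Definition holds (s : atom) f : bool := [exists i : 'I_(size S), (nth Top S i == f) && s i].

Lemma beval_atom_conj v bx s : beval v bx (atom_conj s) = (atom_of v bx == s).
Proof.
rewrite beval_bigAnd all_map; apply/allP/eqP => [conj_s | <- i _].
  apply/ffunP => i; rewrite /atom_of ffunE; move: (conj_s i (mem_enum _ i)).
  by rewrite /= /lit; case: (s i) => //= /negbTE.
by rewrite /= /lit /atom_of ffunE; case: ifP => /= [-> | /negbT].
Qed.

Lemma holds_atom_of v bx f : f \in S -> holds (atom_of v bx) f = beval v bx f.
Proof.
move=> fS; apply/existsP/idP => [[i /andP[/eqP <-]] | bf]; first by rewrite /atom_of ffunE.
have fi : index f S < size S by rewrite index_mem.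
by exists (Ordinal fi) => /=; rewrite nth_index // eqxx /atom_of ffunE /= nth_index.
Qed.

Hypothesis logicL : is_logic L.

Lemma consistent_realized s a :
  consistent s -> L a -> exists v bx, atom_of v bx = s /\ beval v bx a.
Proof.
move=> cs La; apply: contrapT => unreal; apply: cs.
apply: (logic_consequence logicL La) => v bx ba /=; rewrite beval_atom_conj.
by apply/eqP => s_vbx; apply: unreal; exists v, bx.
Qed.

Lemma consistent_complete g :
  (forall v bx, consistent (atom_of v bx) -> beval v bx g) -> L g.
Proof.
move=> cons_g.
pose inconsistent := [seq Neg (atom_conj s) | s <- enum {: atom} & ~~ `[< consistent s >]].
apply: (logic_consequence logicL (logic_bigAnd logicL (hs := inconsistent) _)).
  by move=> h /mapP[s]; rewrite mem_filter => /andP[/asboolPn/contrapT ? _] ->.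
move=> v bx; rewrite beval_bigAnd => /allP all_incons.
have [//|incons] := asboolP (consistent (atom_of v bx)); first exact: cons_g.
have : Neg (atom_conj (atom_of v bx)) \in inconsistent.
  by apply/mapP; exists (atom_of v bx); rewrite // mem_filter mem_enum andbT; exact/asboolPn.
by move/all_incons; rewrite /= beval_atom_conj eqxx.
Qed.

End Atoms.

Definition world (L : form -> Prop) (S : seq form) :=
  {s : {ffun 'I_(size S) -> bool} | `[< @consistent L S s >]}.
HB.instance Definition _ L S := Finite.on (world L S).

Definition boxes (S : seq form) : seq form := [seq c <- S | Box c \in S].

Section CanonicalModel.
Variables (L : form -> Prop) (S : seq form).
Hypothesis logicL : is_logic L.
Local Notation W := (world L S).

Definition ext f : {set W} := [set w | holds (val w) f].

Definition adequate (fb : {set W} -> {set W}) : Prop :=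
  forall c, c \in boxes S -> fb (ext c) = ext (Box c).

Definition canonical_frame (nonempty : 0 < #|{: W}|) fb : finframe :=
  FinFrame W nonempty fb.

Definition world_of v bx (cons_vbx : consistent L (atom_of S v bx)) : W :=
  exist _ (atom_of S v bx) (asboolT cons_vbx).

Lemma world_realized (w : W) a :
  L a -> exists v bx, atom_of S v bx = val w /\ beval v bx a.
Proof. exact: consistent_realized (elimT (asboolP _) (valP w)). Qed.

Lemma world_valuation (w : W) : exists v bx, atom_of S v bx = val w.
Proof.
by have [v [bx [val_w _]]] := world_realized w (logic_taut logicL (@beval_Top)); exists v, bx.
Qed.

Lemma in_ext_atom_of (w : W) v bx a :
  atom_of S v bx = val w -> a \in S -> (w \in ext a) = beval v bx a.
Proof. by move=> val_w aS; rewrite inE -val_w holds_atom_of. Qed.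

Lemma ext_subset a b : a \in S -> b \in S -> ext a \subset ext b <-> L (Imp a b).
Proof.
move=> aS bS; split=> [/subsetP ab | Lab].
  apply: (consistent_complete (S := S)) => // v bx cons_vbx.
  have := ab (world_of cons_vbx).
  by rewrite !inE /= !holds_atom_of //; case: (beval v bx a) => // ->.
apply/subsetP => w; rewrite !inE; have [v [bx [<- /=]]] := world_realized w Lab.
by rewrite !holds_atom_of //; case: (beval v bx a) => // /negbNE.
Qed.

Lemma ext_setT f : f \in S -> ext f = setT <-> L f.
Proof.
move=> fS; split=> [ext_f | Lf].
  apply: (consistent_complete (S := S)) => // v bx cons_vbx.
  move/setP/(_ (world_of cons_vbx)): ext_f.
  by rewrite !inE /= holds_atom_of.
apply/setP => w; rewrite !inE; have [v [bx [<- bf]]] := world_realized w Lf.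
by rewrite holds_atom_of.
Qed.

Lemma ext_eq a b : a \in S -> b \in S -> ext a = ext b <-> L (Iff a b).
Proof.
move=> aS bS; rewrite logic_AndP // -!ext_subset //.
by split=> [-> | [ab ba]]; [rewrite subxx | apply/eqP; rewrite eqEsubset ab ba].
Qed.

Lemma ext_Neg a : Neg a \in S -> a \in S -> ext (Neg a) = ~: ext a.
Proof.
move=> naS aS; apply/setP => w; rewrite !inE.
by have [v [bx <-]] := world_valuation w; rewrite !holds_atom_of.
Qed.

Lemma ext_And a b : And a b \in S -> a \in S -> b \in S -> ext (And a b) = ext a :&: ext b.
Proof.
move=> abS aS bS; apply/setP => w; rewrite !inE.
by have [v [bx <-]] := world_valuation w; rewrite !holds_atom_of.
Qed.

Lemma truth_ext nonempty fb : adequate fb ->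
  forall a, {subset sub a <= S} ->
  truth (canonical_frame nonempty fb) (fun k => ext (Var k)) a = ext a.
Proof.
move=> fb_ad; elim=> [k | a IH | a IHa b IHb | a IH] //= subS.
- have sub_a : {subset sub a <= S} by move=> x ax; apply: subS; rewrite inE ax orbT.
  by rewrite IH // ext_Neg //; [exact: subS _ (mem_head _ _) | exact: sub_a _ (sub_self _)].
- have sub_a : {subset sub a <= S}.
    by move=> x ax; apply: subS; rewrite inE mem_cat ax orbT.
  have sub_b : {subset sub b <= S}.
    by move=> x bx; apply: subS; rewrite inE mem_cat bx !orbT.
  rewrite IHa // IHb // ext_And //; first exact: subS _ (mem_head _ _).
    exact: sub_a _ (sub_self _).
  exact: sub_b _ (sub_self _).
- have sub_a : {subset sub a <= S} by move=> x ax; apply: subS; rewrite inE ax orbT.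
  by rewrite IH // fb_ad // mem_filter subS ?mem_head // sub_a ?sub_self.
Qed.

Lemma boxesP c : c \in boxes S -> c \in S /\ Box c \in S.
Proof. by rewrite mem_filter => /andP[]. Qed.

Lemma ext_Box_congr c c' : c \in boxes S -> c' \in boxes S ->
  ext c = ext c' -> ext (Box c) = ext (Box c').
Proof.
move=> /boxesP[cS BcS] /boxesP[c'S Bc'S] /ext_eq eq_cc'.
by apply/ext_eq => //; apply: logic_RE => //; exact: eq_cc'.
Qed.

Definition boxE4 (X : {set W}) : {set W} :=
  if ohead [seq c <- boxes S | ext c == X] is Some c then ext (Box c) else X.

Variant boxE4_spec X : {set W} -> Prop :=
  | BoxE4Ext c of c \in boxes S & ext c = X : boxE4_spec X (ext (Box c))
  | BoxE4Id of (forall c, c \in boxes S -> ext c != X) : boxE4_spec X X.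

Lemma boxE4P X : boxE4_spec X (boxE4 X).
Proof.
rewrite /boxE4; case def_cs: [seq c <- boxes S | ext c == X] => [|c cs] /=.
  constructor=> c cb; apply/negP => c_X.
  suff: c \in [seq c <- boxes S | ext c == X] by rewrite def_cs.
  by rewrite mem_filter c_X.
have : c \in [seq c <- boxes S | ext c == X] by rewrite def_cs mem_head.
by rewrite mem_filter => /andP[/eqP c_X cb]; constructor.
Qed.

Lemma boxE4_adequate : adequate boxE4.
Proof.
move=> c cb; case: boxE4P => [c' c'b c'_c | /(_ c cb)]; last by rewrite eqxx.
exact: ext_Box_congr.
Qed.

Lemma boxE4_4 : L ax4 -> forall X, boxE4 X \subset boxE4 (boxE4 X).
Proof.
move=> L4 X; case: boxE4P => [c cb _ | nX]; last by case: boxE4P => [c /nX/eqP nXc /nXc [] | ].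
case: boxE4P => // c' c'b c'_Bc.
have [[cS BcS] [c'S Bc'S]] := (boxesP cb, boxesP c'b).
have /(logic_RE logicL) Bc'_BBc : L (Iff c' (Box c)) by apply/ext_eq.
apply/ext_subset => //.
apply: (logic_consequence logicL (logic_And logicL Bc'_BBc (logic_ax4 logicL c L4))).
by move=> v bx /=; case: (bx c); case: (bx c'); case: (bx (Box c)).
Qed.

Definition boxS04 (X : {set W}) : {set W} :=
  [set w | has (fun c => (w \in ext (Box c)) && (ext (Box c) \subset X)) (boxes S)].

Lemma boxS04_adequate : L axT -> L axM -> L ax4 -> adequate boxS04.
Proof.
move=> LT LM L4 c cb; have [cS BcS] := boxesP cb.
apply/setP => w; rewrite inE; apply/hasP/idP => [[c' /boxesP[c'S Bc'S]] | w_Bc].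
  case/andP=> w_Bc' /ext_subset Bc'_c; apply: subsetP w w_Bc'; apply/ext_subset => //.
  have BBc'_Bc := logic_box_mono logicL LM (Bc'_c Bc'S cS).
  apply: (logic_consequence logicL (logic_And logicL BBc'_Bc (logic_ax4 logicL c' L4))).
  by move=> v bx /=; case: (bx c); case: (bx c'); case: (bx (Box c')).
by exists c; rewrite // w_Bc; apply/ext_subset => //; exact: logic_axT.
Qed.

Lemma boxS04_T X : boxS04 X \subset X.
Proof. by apply/subsetP => w; rewrite inE => /hasP[c _ /andP[w_Bc /subsetP]]; apply. Qed.

Lemma boxS04_M (X Y : {set W}) : X \subset Y -> boxS04 X \subset boxS04 Y.
Proof.
move=> XY; apply/subsetP => w; rewrite !inE => /hasP[c cb /andP[w_Bc BcX]].
by apply/hasP; exists c; rewrite // w_Bc (subset_trans BcX XY).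
Qed.

Lemma boxS04_4 X : boxS04 X \subset boxS04 (boxS04 X).
Proof.
apply/subsetP => w; rewrite !inE => /hasP[c cb /andP[w_Bc BcX]].
apply/hasP; exists c; rewrite // w_Bc; apply/subsetP => u u_Bc.
by rewrite inE; apply/hasP; exists c; rewrite // u_Bc.
Qed.

Definition delta (G : seq form) : form := bigAnd [seq And c (Box c) | c <- G].

Lemma logic_box_delta G : L ax4 -> L axC ->
  L (Imp (And (Box Top) (bigAnd (map Box G))) (Box (delta G))).
Proof.
move=> L4 LC; elim: G => [|c G IH].
  by apply: (logic_taut logicL) => v bx /=; rewrite andbN andbT; case: (bx Top).
apply: (logic_consequence logicL (logic_And logicL IH (logic_And logicL (logic_ax4 logicL c L4)
  (logic_And logicL (logic_axC logicL c (Box c) LC) (logic_axC logicL (And c (Box c)) (delta G) LC))))).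
move=> v bx /=.
by move: (bx Top) (beval v bx (bigAnd (map Box G))) (bx (delta G)) (bx c) (bx (Box c))
  (bx (And c (Box c))) (bx (delta (c :: G))) => [] [] [] [] [] [] [].
Qed.

Definition access (w : W) : {set W} :=
  [set u | all (fun c => (w \in ext (Box c)) ==> (u \in ext c :&: ext (Box c))) (boxes S)].

Definition boxEMC4 (X : {set W}) : {set W} := ext (Box Top) :&: [set w | access w \subset X].

Lemma accessP w u : reflect
  (forall c, c \in boxes S -> w \in ext (Box c) -> u \in ext c :&: ext (Box c))
  (u \in access w).
Proof.
rewrite inE; apply: (iffP allP) => acc c cb; last by apply/implyP; exact: acc.
by move/implyP: (acc c cb).
Qed.

Lemma access_trans w u : u \in access w -> access u \subset access w.
Proof.
move/accessP=> uw; apply/subsetP => x /accessP xu; apply/accessP => c cb w_Bc.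
by apply: xu => //; case/setIP: (uw c cb w_Bc).
Qed.

Lemma in_boxEMC4 X w : (w \in boxEMC4 X) = (w \in ext (Box Top)) && (access w \subset X).
Proof. by rewrite in_setI [in X in _ && X]inE. Qed.

Lemma boxEMC4_M (X Y : {set W}) : X \subset Y -> boxEMC4 X \subset boxEMC4 Y.
Proof.
by move=> XY; apply/setIS/subsetP => w; rewrite !inE => /subset_trans; apply.
Qed.

Lemma boxEMC4_C (X Y : {set W}) : boxEMC4 X :&: boxEMC4 Y \subset boxEMC4 (X :&: Y).
Proof.
apply/subsetP => w; rewrite in_setI !in_boxEMC4 => /andP[/andP[-> wX] /andP[_ wY]].
by rewrite subsetI wX wY.
Qed.

Lemma boxEMC4_4 : Top \in boxes S -> forall X, boxEMC4 X \subset boxEMC4 (boxEMC4 X).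
Proof.
move=> topb X; apply/subsetP => w; rewrite !in_boxEMC4 => /andP[wT wX]; rewrite wT.
apply/subsetP => u uw; rewrite in_boxEMC4 (subset_trans (access_trans uw) wX) andbT.
by case/setIP: (accessP _ _ uw Top topb wT).
Qed.

Lemma access_sub_ext_Box c w : L axM -> L ax4 -> L axC -> Top \in boxes S ->
  c \in boxes S -> w \in ext (Box Top) -> access w \subset ext c -> w \in ext (Box c).
Proof.
move=> LM L4 LC topb cb wT w_c; have [cS BcS] := boxesP cb.
pose G := [seq c' <- boxes S | w \in ext (Box c')].
have delta_c : L (Imp (delta G) c).
  apply: (consistent_complete (S := S)) => // v bx cons_vbx; pose u := world_of cons_vbx.
  rewrite /= beval_bigAnd all_map; case: allP => //= delta_u; rewrite negbK.
  rewrite -(@in_ext_atom_of u) //; apply: (subsetP w_c); apply/accessP => c' c'b w_Bc'.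
  have [c'S Bc'S] := boxesP c'b.
  have /delta_u/andP[] : c' \in G by rewrite mem_filter w_Bc' c'b.
  by rewrite in_setI !(@in_ext_atom_of u v bx) //= => -> ->.
have [v [bx [val_w]]] := world_realized w
  (logic_And logicL (logic_box_mono logicL LM delta_c) (logic_box_delta G L4 LC)).
have bx_Top : bx Top by move: wT; rewrite (in_ext_atom_of val_w) // (boxesP topb).2.
have bx_G : beval v bx (bigAnd (map Box G)).
  rewrite beval_bigAnd all_map; apply/allP => c'; rewrite mem_filter => /andP[w_Bc' c'b].
  by move: w_Bc'; rewrite (in_ext_atom_of val_w) // (boxesP c'b).2.
rewrite /= (in_ext_atom_of val_w) //= bx_Top bx_G /=.
by case: (bx (delta G)); case: (bx c).
Qed.

Lemma boxEMC4_adequate : L axM -> L ax4 -> L axC -> Top \in boxes S -> adequate boxEMC4.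
Proof.
move=> LM L4 LC topb c cb; have [cS BcS] := boxesP cb; have [TS BTS] := boxesP topb.
apply/setP => w; rewrite in_boxEMC4; apply/andP/idP => [[wT w_c] | w_Bc].
  exact: access_sub_ext_Box.
split; last by apply/subsetP => u /accessP/(_ c cb w_Bc)/setIP[].
apply: subsetP w_Bc; apply/ext_subset => //; apply: logic_box_mono => //.
by apply: (logic_taut logicL) => v bx /=; rewrite andbN andbF.
Qed.

End CanonicalModel.

Section FiniteModelProperty.
Variables (L0 : form -> Prop) (psi : form).
Hypothesis psi_var_free : var_free psi.
Local Notation L := (plus L0 psi).
Variable fb : forall S, {set world L S} -> {set world L S}.
Hypothesis fb_adequate : forall S, Top \in boxes S -> adequate (@fb S).
Hypothesis fb_sound : forall S (nonempty : 0 < #|{: world L S}|), Top \in boxes S ->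
  forall a, L0 a -> valid (canonical_frame nonempty (@fb S)) a.

Lemma fmp_plus_var_free : fmp L.
Proof.
apply: fmp_refuting_frames => f not_Lf.
have logicL : is_logic L := gen_logic_is_logic _.
pose S := sub f ++ sub psi ++ sub (Box Top).
have sub_f : {subset sub f <= S} by move=> a fa; rewrite mem_cat fa.
have sub_psi : {subset sub psi <= S} by move=> a psia; rewrite !mem_cat psia orbT.
have sub_top : {subset sub (Box Top) <= S} by move=> a topa; rewrite !mem_cat topa !orbT.
have topb : Top \in boxes S.
  by rewrite mem_filter !sub_top ?sub_self // inE sub_self orbT.
have nonempty : 0 < #|{: world L S}|.
  rewrite lt0n; apply: contra_notN not_Lf => /eqP empty.
  by apply/(ext_setT logicL (sub_f _ (sub_self f)))/setP => w; move: (card0_eq empty w).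
exists (canonical_frame nonempty (@fb S)); split.
  apply: valid_plus => [a /fb_sound | U]; first exact.
  rewrite (truth_var_free U (fun k => ext L S (Var k)) psi_var_free).
  rewrite (truth_ext logicL _ (fb_adequate topb) sub_psi).
  by apply/(ext_setT logicL (sub_psi _ (sub_self psi))); exact: plus_axiom.
move/(_ (fun k => ext L S (Var k))); rewrite (truth_ext logicL _ (fb_adequate topb) sub_f).
by move/(ext_setT logicL (sub_f _ (sub_self f))).
Qed.

End FiniteModelProperty.

Lemma fmp_E4 psi : var_free psi -> fmp (plus E4 psi).
Proof.
move=> psi_vf; have logicL : is_logic (plus E4 psi) := gen_logic_is_logic _.
have L4 : plus E4 psi ax4 by apply: plus_sub; exact: plus_axiom.
apply: (@fmp_plus_var_free E4 psi psi_vf (@boxE4 _)) => [S _ | S nonempty _].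
  exact: boxE4_adequate.
apply: valid_plus; first exact: valid_E.
by apply: valid_ax4; exact: boxE4_4 logicL L4.
Qed.

Lemma fmp_S04 psi : var_free psi -> fmp (plus S04 psi).
Proof.
move=> psi_vf; have logicL : is_logic (plus S04 psi) := gen_logic_is_logic _.
have L4 : plus S04 psi ax4 by do 3!apply: plus_sub; exact: plus_axiom.
have LT : plus S04 psi axT by do 2!apply: plus_sub; exact: plus_axiom.
have LM : plus S04 psi axM by apply: plus_sub; exact: plus_axiom.
apply: (@fmp_plus_var_free S04 psi psi_vf (@boxS04 _)) => [S _ | S nonempty _].
  exact: boxS04_adequate.
apply: valid_plus; last exact/valid_axM/boxS04_M.
apply: valid_plus; last exact/valid_axT/boxS04_T.
apply: valid_plus; first exact: valid_E.
exact/valid_ax4/boxS04_4.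
Qed.

Lemma fmp_EMC4 psi : var_free psi -> fmp (plus EMC4 psi).
Proof.
move=> psi_vf; have logicL : is_logic (plus EMC4 psi) := gen_logic_is_logic _.
have L4 : plus EMC4 psi ax4 by do 3!apply: plus_sub; exact: plus_axiom.
have LM : plus EMC4 psi axM by do 2!apply: plus_sub; exact: plus_axiom.
have LC : plus EMC4 psi axC by apply: plus_sub; exact: plus_axiom.
apply: (@fmp_plus_var_free EMC4 psi psi_vf (@boxEMC4 _)) => [S topb | S nonempty topb].
  exact: boxEMC4_adequate.
apply: valid_plus; last exact/valid_axC/boxEMC4_C.
apply: valid_plus; last exact/valid_axM/boxEMC4_M.
apply: valid_plus; first exact: valid_E.
exact/valid_ax4/boxEMC4_4.
Qed.

Theorem mainTheorem3 (psi : form) :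
  var_free psi ->
  fmp (plus E4 psi) /\ fmp (plus S04 psi) /\ fmp (plus EMC4 psi).
Proof. by move=> psi_vf; split; [|split]; [exact: fmp_E4 | exact: fmp_S04 | exact: fmp_EMC4]. Qed.
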